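(* Let $\mathfrak g$ be a finite-dimensional simple Lie algebra over $\mathbb R$ or $\mathbb C$ and let $T$ be a maximal Lie triple subsystem of $\mathfrak g$. Then either $T$ is a maximal subalgebra of $\mathfrak g$, or $\mathfrak g=[T,T]\oplus T$ is a nontrivial $\mathbb Z_2$-grading of $\mathfrak g$ with even part $[T,T]$ and odd part $T$.
   Context: A Lie algebra $\mathfrak g$ is regarded as a Lie triple system with triple product $[x,y,z]:=[[x,y],z]$. A Lie triple subsystem of $\mathfrak g$ is a vector subspace $T$ with $[[T,T],T]\subseteq T$. A maximal Lie triple subsystem is a proper Lie triple subsystem not properly contained in any other proper Lie triple subsystem. $[T,T]$ denotes the span of all brackets $[x,y]$, $x,y\in T$. *)

From HB Require Import structures.
From mathcomp Require Import all_boot all_order all_algebra.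
From mathcomp Require Import reals.
From mathcomp Require Import complex.
Set Implicit Arguments. Unset Strict Implicit. Unset Printing Implicit Defensive.
Import Order.TTheory GRing.Theory Num.Theory.
Local Open Scope ring_scope.

Definition RorC (R : realType) (b : bool) : fieldType :=
  if b then (R : fieldType) else (R[i] : fieldType).

Section Lie.
Variables (K : fieldType) (V : vectType K).

Definition lie_bracket (br : V -> V -> V) : Prop :=
  [/\ (forall (a : K) (x y z : V), br (a *: x + y) z = a *: br x z + br y z),
      (forall (a : K) (x y z : V), br z (a *: x + y) = a *: br z x + br z y),
      (forall x : V, br x x = 0) &
      (forall x y z : V, br x (br y z) + br y (br z x) + br z (br x y) = 0)].

Variable br : V -> V -> V.

Definition lie_ideal (I : {vspace V}) : Prop :=
  forall x y, y \in I -> br x y \in I.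

Definition lie_simple : Prop :=
  (exists x y, br x y != 0) /\
  forall I : {vspace V}, lie_ideal I -> I = 0%VS \/ I = fullv.

Definition lie_subalgebra (S : {vspace V}) : Prop :=
  forall x y, x \in S -> y \in S -> br x y \in S.

Definition lie_triple_system (T : {vspace V}) : Prop :=
  forall x y z, x \in T -> y \in T -> z \in T -> br (br x y) z \in T.

Definition maximal_subalgebra (S : {vspace V}) : Prop :=
  [/\ lie_subalgebra S, S != fullv &
      forall U : {vspace V}, lie_subalgebra U -> (S <= U)%VS -> U != fullv -> U = S].

Definition maximal_lie_triple_system (T : {vspace V}) : Prop :=
  [/\ lie_triple_system T, T != fullv &
      forall U : {vspace V}, lie_triple_system U -> (T <= U)%VS -> U != fullv -> U = T].

(* [A, B] : the span of all brackets [a, b], a in A, b in B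
   (by bilinearity, spanned by brackets of basis vectors). *)
Definition bracket_span (A B : {vspace V}) : {vspace V} :=
  << [seq br a b | a <- vbasis A, b <- vbasis B] >>%VS.

Definition Z2_grading (g0 g1 : {vspace V}) : Prop :=
  [/\ (g0 + g1)%VS = fullv, directv (g0 + g1),
      (forall x y, x \in g0 -> y \in g0 -> br x y \in g0),
      (forall x y, x \in g0 -> y \in g1 -> br x y \in g1) &
      (forall x y, x \in g1 -> y \in g1 -> br x y \in g0)].

End Lie.

From HB Require Import structures.
From mathcomp Require Import all_boot all_order all_algebra.
From mathcomp Require Import reals.
From mathcomp Require Import complex.
Local Open Scope ring_scope.
Set Implicit Arguments. Unset Strict Implicit. Unset Printing Implicit Defensive.
Import GRing.Theory.

(* S := [T,T] + T is a subalgebra containing T, hence a Lie triple system, so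
   by maximality of T either S = T or S = g.  If S = T, then T is a subalgebra,
   and it is a maximal one because every subalgebra is a Lie triple system.
   If S = g, the brackets of [T,T] and T with each other land where a
   Z_2-grading requires them to (using the Jacobi identity for [[T,T],[T,T]]),
   so [T,T] :&: T is an ideal of g; it is not g since T is proper, hence it is
   0 and the sum is direct.  Finally T <> 0, as otherwise g = S = 0 would be
   abelian.  Nothing here depends on the base field. *)

Lemma span_ind (K : fieldType) (V : vectType K) (P : V -> Prop) (X : seq V) :
  P 0 -> (forall a x y, P x -> P y -> P (a *: x + y)) ->
  {in X, forall v, P v} -> {in <<X>>%VS, forall v, P v}.
Proof.
move=> P0 PD PX v /(coord_span (X := in_tuple X)) ->.
apply: (big_ind P) => //.
  by move=> x y Px Py; have := PD 1 x y Px Py; rewrite scale1r.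
move=> i _; have := PD (coord (in_tuple X) i v) X`_i 0 (PX _ (mem_nth 0 (ltn_ord i))) P0.
by rewrite addr0.
Qed.

Section LieBracket.
Variables (K : fieldType) (V : vectType K) (br : V -> V -> V).
Hypothesis hbr : lie_bracket br.

Lemma brDZl a x y z : br (a *: x + y) z = a *: br x z + br y z.
Proof. by case: hbr. Qed.

Lemma brDZr a x y z : br z (a *: x + y) = a *: br z x + br z y.
Proof. by case: hbr. Qed.

Lemma brDl x y z : br (x + y) z = br x z + br y z.
Proof. by have := brDZl 1 x y z; rewrite !scale1r. Qed.

Lemma brDr x y z : br z (x + y) = br z x + br z y.
Proof. by have := brDZr 1 x y z; rewrite !scale1r. Qed.

Lemma br0l z : br 0 z = 0.
Proof. by apply: (addrI (br 0 z)); rewrite -brDl !addr0. Qed.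

Lemma br0r z : br z 0 = 0.
Proof. by apply: (addrI (br z 0)); rewrite -brDr !addr0. Qed.

Lemma brxx x : br x x = 0.
Proof. by case: hbr. Qed.

Lemma br_anticomm x y : br x y = - br y x.
Proof.
have := brxx (x + y); rewrite brDl !brDr !brxx add0r addr0 => /eqP.
by rewrite addr_eq0 => /eqP.
Qed.

Lemma br_jacobi x y z : br (br x y) z = br x (br y z) + br y (br z x).
Proof.
case: hbr => _ _ _ /(_ x y z) /eqP; rewrite addr_eq0 => /eqP ->.
by rewrite [br z _]br_anticomm opprK.
Qed.

Lemma br_span_l (W : {vspace V}) (X : seq V) y :
  {in X, forall v, br v y \in W} -> {in <<X>>%VS, forall v, br v y \in W}.
Proof.
move=> XW; apply: span_ind => //; first by rewrite br0l mem0v.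
by move=> a x z xW zW; rewrite brDZl memvD ?memvZ.
Qed.

Lemma br_span_r (W : {vspace V}) (X : seq V) y :
  {in X, forall v, br y v \in W} -> {in <<X>>%VS, forall v, br y v \in W}.
Proof.
move=> XW; apply: span_ind => //; first by rewrite br0r mem0v.
by move=> a x z xW zW; rewrite brDZr memvD ?memvZ.
Qed.

Lemma mem_bracket_span (A B : {vspace V}) x y :
  x \in A -> y \in B -> br x y \in bracket_span br A B.
Proof.
rewrite -{1}(span_basis (vbasisP A)) -{1}(span_basis (vbasisP B)) => xA yB.
apply: (br_span_l _ xA) => a aA; apply: (br_span_r _ yB) => c cB.
exact/memv_span/allpairs_f.
Qed.

Lemma bracket_span_ind (A B W : {vspace V}) y :
  (forall a c, a \in A -> c \in B -> br (br a c) y \in W) ->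
  {in bracket_span br A B, forall u, br u y \in W}.
Proof.
move=> ABW; apply: br_span_l => z /allpairsP[[a c] [/= /vbasis_mem aA /vbasis_mem cB ->]].
exact: ABW.
Qed.

Lemma bracket_span0l (B : {vspace V}) : bracket_span br 0 B = 0%VS.
Proof.
apply/eqP; rewrite -subv0; apply/span_subvP => z /allpairsP[[a c] [/= /vbasis_mem]].
by rewrite memv0 => /eqP -> _ ->; rewrite br0l mem0v.
Qed.

Lemma lie_subalgebra_triple_system (U : {vspace V}) :
  lie_subalgebra br U -> lie_triple_system br U.
Proof. by move=> subU x y z xU yU zU; apply: (subU) => //; apply: (subU). Qed.

Section TripleSystem.
Variable T : {vspace V}.
Hypothesis hT : lie_triple_system br T.
Notation TT := (bracket_span br T T).

Lemma br_TT_T u t : u \in TT -> t \in T -> br u t \in T.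
Proof. by move=> uTT tT; apply: (bracket_span_ind _ uTT) => a c aT cT; apply: hT. Qed.

Lemma br_T_TT t u : t \in T -> u \in TT -> br t u \in T.
Proof. by move=> tT uTT; rewrite br_anticomm memvN br_TT_T. Qed.

Lemma br_TT_TT u v : u \in TT -> v \in TT -> br u v \in TT.
Proof.
move=> uTT vTT; rewrite br_anticomm memvN; apply: (bracket_span_ind _ vTT) => c d cT dT.
rewrite br_jacobi; apply: memvD; apply: mem_bracket_span => //.
- exact: br_T_TT.
- exact: br_TT_T.
Qed.

Lemma lie_subalgebra_bracket_span_add : lie_subalgebra br (TT + T)%VS.
Proof.
move=> x y /memv_addP[x1 x1TT [x2 x2T ->]] /memv_addP[y1 y1TT [y2 y2T ->]].
rewrite !brDl !brDr [br x2 y1 + _]addrC addrACA.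
apply: memv_add; apply: memvD.
- exact: br_TT_TT.
- exact: mem_bracket_span.
- exact: br_TT_T.
- exact: br_T_TT.
Qed.

Lemma lie_ideal_bracket_span_cap :
  (TT + T)%VS = fullv -> lie_ideal br (TT :&: T)%VS.
Proof.
move=> full x y /memv_capP[yTT yT].
have /memv_addP[x1 x1TT [x2 x2T ->]] : x \in (TT + T)%VS by rewrite full memvf.
rewrite brDl memv_cap; apply/andP; split; apply: memvD.
- exact: br_TT_TT.
- exact: mem_bracket_span.
- exact: br_TT_T.
- exact: br_T_TT.
Qed.

Lemma Z2_grading_bracket_span :
  lie_simple br -> T != fullv -> (TT + T)%VS = fullv -> Z2_grading br TT T.
Proof.
move=> [_ simple] Tnf full; split=> //.
- apply/directv_addP.
  have [//|TTcapT] := simple _ (lie_ideal_bracket_span_cap full).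
  by case/eqP: Tnf; apply/eqP; rewrite eqEsubv subvf -TTcapT capvSr.
- exact: br_TT_TT.
- exact: br_TT_T.
- exact: mem_bracket_span.
Qed.

Lemma maximal_subalgebra_triple_system :
  maximal_lie_triple_system br T -> lie_subalgebra br T -> maximal_subalgebra br T.
Proof.
case=> _ Tnf Tmax subT; split=> // U subU TU Unf.
exact/Tmax/Unf/TU/lie_subalgebra_triple_system.
Qed.

End TripleSystem.

Lemma lie_simple_nontrivial : lie_simple br -> (0%VS : {vspace V}) != fullv.
Proof.
case=> -[x [y nz]] _; apply: contraNneq nz => zero_full.
have z0 (v : V) : v = 0 by apply/eqP; rewrite -memv0 zero_full memvf.
by rewrite (z0 x) br0l.
Qed.

Theorem maximal_triple_system_dichotomy (T : {vspace V}) :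
  lie_simple br -> maximal_lie_triple_system br T ->
  maximal_subalgebra br T \/
  (Z2_grading br (bracket_span br T T) T /\ T != 0%VS).
Proof.
move=> simple maxT; have [hT Tnf Tmax] := maxT.
have subS := lie_subalgebra_bracket_span_add hT.
have TS : (T <= bracket_span br T T + T)%VS by apply: addvSr.
have [full | Snf] := eqVneq (bracket_span br T T + T)%VS fullv; last first.
  left; apply: maximal_subalgebra_triple_system => //.
  by rewrite -(Tmax _ (lie_subalgebra_triple_system subS) TS Snf).
right; split; first exact: Z2_grading_bracket_span.
apply: contraNneq (lie_simple_nontrivial simple) => T0.
by rewrite -full T0 bracket_span0l addv0.
Qed.

End LieBracket.

Theorem mainTheorem5 (R : realType) (b : bool) (V : vectType (RorC R b))
    (br : V -> V -> V) (T : {vspace V}) :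
  lie_bracket br -> lie_simple br -> maximal_lie_triple_system br T ->
  maximal_subalgebra br T \/
  (Z2_grading br (bracket_span br T T) T /\ T != 0%VS).
Proof. by move=> hbr; apply: (@maximal_triple_system_dichotomy _ V br hbr T). Qed.
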